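(* A hypersemigroup $(H,\circ)$ is both regular and intra-regular if and only if for every right ideal $X$, every left ideal $Y$ and every bi-ideal $B$ of $H$ we have $X\cap B\cap Y\subseteq B*X*Y$.
   Context: Let $H$ be a nonempty set and $\mathcal{P}^*(H)$ the set of all nonempty subsets of $H$. A hyperoperation on $H$ is a map $\circ: H\times H\to \mathcal{P}^*(H)$; the pair $(H,\circ)$ is a hypergroupoid. For $A,B\in\mathcal{P}^*(H)$ define $A*B:=\bigcup_{(a,b)\in A\times B}(a\circ b)$. A hypergroupoid is a hypersemigroup if $\{x\}*(y\circ z)=(x\circ y)*\{z\}$ for all $x,y,z\in H$; then $*$ is associative on $\mathcal{P}^*(H)$. A hypersemigroup is regular if for every $a\in H$ there exists $x\in H$ with $a\in(a\circ x)*\{a\}$, and intra-regular if for every $a\in H$ there exist $x,y\in H$ with $a\in\{x\}*\{a\}*\{a\}*\{y\}$. A nonempty subset $A$ of $H$ is a left ideal if $H*A\subseteq A$ and a right ideal if $A*H\subseteq A$. A nonempty subset $B$ of $H$ is a bi-ideal if $B*H*B\subseteq B$. *)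

Definition hset (H : Type) := H -> Prop.

Definition subset {H : Type} (A B : hset H) : Prop := forall x, A x -> B x.
Definition nonempty {H : Type} (A : hset H) : Prop := exists x, A x.
Definition single {H : Type} (a : H) : hset H := fun x => x = a.
Definition fullset (H : Type) : hset H := fun _ => True.
Definition inter {H : Type} (A B : hset H) : hset H := fun x => A x /\ B x.

Definition hyperoperation {H : Type} (op : H -> H -> hset H) : Prop :=
  forall x y, nonempty (op x y).

Definition setmul {H : Type} (op : H -> H -> hset H) (A B : hset H) : hset H :=
  fun z => exists a b, A a /\ B b /\ op a b z.

Definition hypersemigroup {H : Type} (op : H -> H -> hset H) : Prop :=
  hyperoperation op /\
  forall x y z w,
    setmul op (single x) (op y z) w <-> setmul op (op x y) (single z) w.

Definition regular {H : Type} (op : H -> H -> hset H) : Prop :=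
  forall a, exists x, setmul op (op a x) (single a) a.

(* a in {x}*{a}*{a}*{y}; * is associative on hypersemigroups, we bracket left *)
Definition intra_regular {H : Type} (op : H -> H -> hset H) : Prop :=
  forall a, exists x y,
    setmul op (setmul op (setmul op (single x) (single a)) (single a)) (single y) a.

Definition left_ideal {H : Type} (op : H -> H -> hset H) (A : hset H) : Prop :=
  nonempty A /\ subset (setmul op (fullset H) A) A.

Definition right_ideal {H : Type} (op : H -> H -> hset H) (A : hset H) : Prop :=
  nonempty A /\ subset (setmul op A (fullset H)) A.

Definition bi_ideal {H : Type} (op : H -> H -> hset H) (B : hset H) : Prop :=
  nonempty B /\ subset (setmul op (setmul op B (fullset H)) B) B.

(* Regularity and intra-regularity say a ∈ aHa and a ∈ HaaH. Substituting the
   second inclusion into the first gives a ∈ aH(HaaH)Ha = (aHHa)(aH)(Ha), and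
   the three factors lie in any bi-ideal B, right ideal X and left ideal Y
   containing a. Conversely, applying the inclusion to the ideals generated by
   a yields a ∈ aHa; from then on a ∈ aH and a ∈ Ha, and applying it to the
   ideals aH, Ha and H yields a ∈ HaaH. *)

From Stdlib Require Import FunctionalExtensionality PropExtensionality.

Lemma hset_ext {H : Type} (A B : hset H) : (forall z, A z <-> B z) -> A = B.
Proof.
  intros hAB. apply functional_extensionality. intro z.
  apply propositional_extensionality. apply hAB.
Qed.

Lemma subset_refl {H : Type} (A : hset H) : subset A A.
Proof. intros z hz. exact hz. Qed.

Lemma subset_trans {H : Type} (A B C : hset H) :
  subset A B -> subset B C -> subset A C.
Proof. intros hAB hBC z hz. apply hBC, hAB, hz. Qed.

Lemma subset_fullset {H : Type} (A : hset H) : subset A (fullset H).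
Proof. intros z _. exact I. Qed.

Lemma subset_single {H : Type} (A : hset H) (a : H) : A a -> subset (single a) A.
Proof. intros ha z hz. unfold single in hz. subst z. exact ha. Qed.

Definition union {H : Type} (A B : hset H) : hset H := fun x => A x \/ B x.

Section Hypersemigroup.

Variables (H : Type) (op : H -> H -> hset H).
Hypothesis hsg : hypersemigroup op.

Local Infix "**" := (setmul op) (at level 40, left associativity).
Local Notation full := (fullset H).

Lemma mul_mono (A A' B B' : hset H) :
  subset A A' -> subset B B' -> subset (A ** B) (A' ** B').
Proof. intros hA hB z (a & b & ha & hb & hz). exists a, b. auto. Qed.

Lemma mul_assoc (A B C : hset H) : A ** B ** C = A ** (B ** C).
Proof.
  destruct hsg as [_ hassoc]. apply hset_ext. intro w. split.
  - intros (u & c & (a & b & ha & hb & hu) & hc & hw).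
    assert (hw' : setmul op (op a b) (single c) w) by (exists u, c; unfold single; auto).
    apply hassoc in hw'. destruct hw' as (a' & v & ha' & hv & hw'').
    unfold single in ha'. subst a'.
    exists a, v. repeat split; auto. exists b, c. auto.
  - intros (a & v & ha & (b & c & hb & hc & hv) & hw).
    assert (hw' : setmul op (single a) (op b c) w) by (exists a, v; unfold single; auto).
    apply hassoc in hw'. destruct hw' as (u & c' & hu & hc' & hw'').
    unfold single in hc'. subst c'.
    exists u, c. repeat split; auto. exists a, b. auto.
Qed.

Lemma mul_union_subset_l (A B C D : hset H) :
  subset (A ** C) D -> subset (B ** C) D -> subset (union A B ** C) D.
Proof.
  intros hA hB z (x & c & [hx | hx] & hc & hz);
    [apply hA | apply hB]; exists x, c; auto.
Qed.

Lemma mul_union_subset_r (A B C D : hset H) :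
  subset (C ** A) D -> subset (C ** B) D -> subset (C ** union A B) D.
Proof.
  intros hA hB z (c & x & hc & [hx | hx] & hz);
    [apply hA | apply hB]; exists c, x; auto.
Qed.

Lemma mul_full_absorb_r (A B : hset H) : subset (A ** B ** full) (A ** full).
Proof.
  rewrite mul_assoc. apply mul_mono; [apply subset_refl | apply subset_fullset].
Qed.

Lemma mul_full_absorb_l (A B : hset H) : subset (full ** A ** B) (full ** B).
Proof. apply mul_mono; [apply subset_fullset | apply subset_refl]. Qed.

Lemma mul_nonempty (A B : hset H) :
  nonempty A -> nonempty B -> nonempty (A ** B).
Proof.
  intros [a ha] [b hb]. destruct (proj1 hsg a b) as [z hz].
  exists z, a, b. auto.
Qed.

Lemma right_ideal_mul_full (A : hset H) :
  nonempty A -> right_ideal op (A ** full).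
Proof.
  intros [a ha]. split.
  - apply mul_nonempty; [exists a; exact ha | exists a; exact I].
  - apply mul_full_absorb_r.
Qed.

Lemma left_ideal_full_mul (A : hset H) :
  nonempty A -> left_ideal op (full ** A).
Proof.
  intros [a ha]. split.
  - apply mul_nonempty; [exists a; exact I | exists a; exact ha].
  - rewrite <- mul_assoc. apply mul_full_absorb_l.
Qed.

Lemma right_ideal_full : inhabited H -> right_ideal op full.
Proof. intros [x]. split; [exists x; exact I | apply subset_fullset]. Qed.

Lemma left_ideal_full : inhabited H -> left_ideal op full.
Proof. intros [x]. split; [exists x; exact I | apply subset_fullset]. Qed.

Definition right_ideal_gen (A : hset H) : hset H := union A (A ** full).
Definition left_ideal_gen (A : hset H) : hset H := union A (full ** A).

Lemma right_ideal_gen_mul_full (A : hset H) :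
  subset (right_ideal_gen A ** full) (A ** full).
Proof.
  apply mul_union_subset_l; [apply subset_refl | apply mul_full_absorb_r].
Qed.

Lemma full_mul_left_ideal_gen (A : hset H) :
  subset (full ** left_ideal_gen A) (full ** A).
Proof.
  apply mul_union_subset_r; [apply subset_refl |].
  rewrite <- mul_assoc. apply mul_full_absorb_l.
Qed.

Lemma right_ideal_right_ideal_gen (A : hset H) :
  nonempty A -> right_ideal op (right_ideal_gen A).
Proof.
  intros [a ha]. split; [exists a; left; exact ha |].
  eapply subset_trans; [apply right_ideal_gen_mul_full |].
  intros z hz. right. exact hz.
Qed.

Lemma left_ideal_left_ideal_gen (A : hset H) :
  nonempty A -> left_ideal op (left_ideal_gen A).
Proof.
  intros [a ha]. split; [exists a; left; exact ha |].
  eapply subset_trans; [apply full_mul_left_ideal_gen |].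
  intros z hz. right. exact hz.
Qed.

Lemma bi_ideal_of_right_ideal (X : hset H) : right_ideal op X -> bi_ideal op X.
Proof.
  intros [hne hX]. split; [exact hne |].
  eapply subset_trans; [| exact hX].
  eapply subset_trans; [| apply (mul_full_absorb_r X full)].
  apply mul_mono; [apply subset_refl | apply subset_fullset].
Qed.

Lemma bi_ideal_of_left_ideal (Y : hset H) : left_ideal op Y -> bi_ideal op Y.
Proof.
  intros [hne hY]. split; [exact hne |].
  eapply subset_trans; [| exact hY].
  apply mul_mono; [apply subset_fullset | apply subset_refl].
Qed.

Lemma regular_iff_mem :
  regular op <-> forall a, (single a ** full ** single a) a.
Proof.
  split.
  - intros hreg a. destruct (hreg a) as (x & u & a' & hu & ha' & hz).
    exists u, a'. split; [| auto].
    exists a, x. unfold single, fullset. auto.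
  - intros hmem a. destruct (hmem a) as (u & a' & (a0 & x & ha0 & _ & hu) & ha' & hz).
    unfold single in ha0. subst a0.
    exists x, u, a'. auto.
Qed.

Lemma intra_regular_iff_mem :
  intra_regular op <-> forall a, (full ** single a ** single a ** full) a.
Proof.
  split.
  - intros hintra a. destruct (hintra a) as (x & y & u & y' & hu & hy' & hz).
    unfold single in hy'. subst y'.
    destruct hu as (v & a1 & (x' & a2 & hx' & ha2 & hv) & ha1 & hu).
    exists u, y. split; [| split; [exact I | exact hz]].
    exists v, a1. split; [| auto].
    exists x', a2. unfold fullset. auto.
  - intros hmem a. destruct hmem with a as
      (u & y & (v & a1 & (x & a2 & _ & ha2 & hv) & ha1 & hu) & _ & hz).
    exists x, y, u, y. split; [| unfold single; auto].
    exists v, a1. split; [| auto].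
    exists x, a2. unfold single. auto.
Qed.

Definition ideal_intersection_property : Prop :=
  forall X Y B : hset H,
    right_ideal op X -> left_ideal op Y -> bi_ideal op B ->
    subset (inter (inter X B) Y) (B ** X ** Y).

Lemma ideal_intersection_property_of_regular :
  regular op -> intra_regular op -> ideal_intersection_property.
Proof.
  rewrite regular_iff_mem, intra_regular_iff_mem.
  intros hreg hintra X Y B [_ hX] [_ hY] [_ hB] a [[haX haB] haY].
  set (S := single a).
  assert (hSreg : subset S (S ** full ** S)) by (apply subset_single, hreg).
  assert (hSintra : subset S (full ** S ** S ** full))
    by (apply subset_single, hintra).
  assert (hS : subset S (S ** full ** ((full ** S ** S ** full) ** full ** S))).
  { eapply subset_trans; [exact hSreg |].
    apply mul_mono; [apply subset_refl |].
    eapply subset_trans; [exact hSreg |].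
    apply mul_mono; [apply mul_mono; [exact hSintra |] |]; apply subset_refl. }
  assert (hregroup : S ** full ** ((full ** S ** S ** full) ** full ** S)
                   = S ** full ** full ** S ** (S ** full) ** (full ** S))
    by (rewrite !mul_assoc; reflexivity).
  rewrite hregroup in hS.
  apply (subset_trans _ _ _ hS); [| reflexivity].
  apply mul_mono; [apply mul_mono |].
  - eapply subset_trans; [| exact hB].
    apply mul_mono; [| apply subset_single, haB].
    eapply subset_trans; [apply mul_full_absorb_r |].
    apply mul_mono; [apply subset_single, haB | apply subset_refl].
  - eapply subset_trans; [| exact hX].
    apply mul_mono; [apply subset_single, haX | apply subset_refl].
  - eapply subset_trans; [| exact hY].
    apply mul_mono; [apply subset_refl | apply subset_single, haY].
Qed.

Lemma regular_of_ideal_intersection_property :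
  inhabited H -> ideal_intersection_property -> regular op.
Proof.
  rewrite regular_iff_mem. intros hH hP a.
  set (S := single a).
  assert (hS : nonempty S) by (exists a; reflexivity).
  assert (haRFL : (right_ideal_gen S ** full ** left_ideal_gen S) a).
  { apply (hP full (left_ideal_gen S) (right_ideal_gen S)).
    - apply right_ideal_full, hH.
    - apply left_ideal_left_ideal_gen, hS.
    - apply bi_ideal_of_right_ideal, right_ideal_right_ideal_gen, hS.
    - split; [split; [exact I |] |]; left; reflexivity. }
  revert haRFL. apply subset_trans with (S ** full ** left_ideal_gen S).
  - apply mul_mono; [apply right_ideal_gen_mul_full | apply subset_refl].
  - rewrite !mul_assoc.
    apply mul_mono; [apply subset_refl | apply full_mul_left_ideal_gen].
Qed.

Lemma intra_regular_of_ideal_intersection_property :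
  inhabited H -> ideal_intersection_property -> intra_regular op.
Proof.
  intros hH hP.
  pose proof (regular_of_ideal_intersection_property hH hP) as hreg.
  rewrite regular_iff_mem in hreg. rewrite intra_regular_iff_mem. intro a.
  set (S := single a).
  assert (hS : nonempty S) by (exists a; reflexivity).
  assert (haSF : (S ** full) a).
  { apply (mul_full_absorb_r S full). generalize (hreg a).
    apply mul_mono; [apply subset_refl | apply subset_fullset]. }
  assert (haFS : (full ** S) a).
  { generalize (hreg a). apply mul_mono; [apply subset_fullset | apply subset_refl]. }
  assert (ha : ((full ** S) ** (S ** full) ** full) a).
  { apply (hP (S ** full) full (full ** S)).
    - apply right_ideal_mul_full, hS.
    - apply left_ideal_full, hH.
    - apply bi_ideal_of_left_ideal, left_ideal_full_mul, hS.
    - split; [split |]; [exact haSF | exact haFS | exact I]. }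
  revert ha. rewrite !mul_assoc.
  repeat (apply mul_mono; [apply subset_refl |]). apply subset_fullset.
Qed.

End Hypersemigroup.

Theorem proposition25 (H : Type) (hH : inhabited H) (op : H -> H -> hset H)
  (hsg : hypersemigroup op) :
  (regular op /\ intra_regular op) <->
  (forall X Y B : hset H,
     right_ideal op X -> left_ideal op Y -> bi_ideal op B ->
     subset (inter (inter X B) Y) (setmul op (setmul op B X) Y)).
Proof.
  fold (ideal_intersection_property H op). split.
  - intros [hreg hintra].
    exact (ideal_intersection_property_of_regular H op hsg hreg hintra).
  - intros hP. split.
    + exact (regular_of_ideal_intersection_property H op hsg hH hP).
    + exact (intra_regular_of_ideal_intersection_property H op hsg hH hP).
Qed.
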